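(* Let $M_1,\dots,M_k$ be matroids on pairwise disjoint finite sets $S_1,\dots,S_k$, let $S=S_1\cup\cdots\cup S_k$, and let $L=M_1\mathbin{\Box}\cdots\mathbin{\Box} M_k$. Then $A\subseteq S$ is independent in $L$ if and only if $$\sum_{i=1}^{j-1}\lambda_{M_i}(A\cap S_i)\ \geq\ \sum_{i=1}^{j}\nu_{M_i}(A\cap S_i)$$ for all $j$ with $1\leq j\leq k$.
   Context: For a matroid $M$ on $S$ write $\rho_M$ for rank, $\rho(M)=\rho_M(S)$, $\nu_M(A)=|A|-\rho_M(A)$, $\lambda_M(A)=\rho(M)-\rho_M(A)$. For matroids $M$ on $S$ and $N$ on $T$ with $S\cap T=\emptyset$, the free product $M\mathbin{\Box} N$ is the matroid on $S\cup T$ whose independent sets are those $A$ with $A\cap S$ independent in $M$ and $\lambda_M(A\cap S)\geq\nu_N(A\cap T)$. Free product is associative, so the iterated product needs no parentheses. *)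

From mathcomp Require Import all_boot.
Set Implicit Arguments. Unset Strict Implicit. Unset Printing Implicit Defensive.

Record setsys (T : finType) := SetSys { ground : {set T}; indep : {set T} -> bool }.

Definition is_matroid (T : finType) (M : setsys T) : Prop :=
  [/\ indep M set0,
      (forall B : {set T}, indep M B -> B \subset ground M),
      (forall A B : {set T}, A \subset B -> indep M B -> indep M A) &
      (forall A B : {set T}, indep M A -> indep M B -> #|A| < #|B| ->
         exists2 x, x \in B :\: A & indep M (x |: A))].

Section Ops.
Variable T : finType.
Implicit Types (M N : setsys T) (A : {set T}).

Definition rk M A : nat := \max_(B : {set T} | (B \subset A) && indep M B) #|B|.
Definition rkM M : nat := rk M (ground M).
Definition nul M A : nat := #|A| - rk M A.
Definition lam M A : nat := rkM M - rk M A.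

Definition fprod M N : setsys T :=
  SetSys (ground M :|: ground N)
    (fun A => [&& A \subset ground M :|: ground N,
                  indep M (A :&: ground M) &
                  nul N (A :&: ground N) <= lam M (A :&: ground M)]).

(* Left-bracketed iterated free product M 1 [] M 2 [] ... [] M n (for n >= 1). *)
Fixpoint fprod_upto (Ms : nat -> setsys T) (n : nat) : setsys T :=
  match n with
  | 0 => Ms 1
  | n'.+1 => if n' == 0 then Ms 1 else fprod (fprod_upto Ms n') (Ms n)
  end.
End Ops.

From Pilot Require Import Defs.
From mathcomp Require Import all_boot zify.

(* Write L for the product of the first k-1 factors and
   A' = A ∩ (S_1 ∪ ... ∪ S_{k-1}); by definition A is independent in L □ M_k
   iff A' is independent in L and ν_{M_k}(A ∩ S_k) ≤ λ_L(A').  The rank of a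
   free product of set systems on disjoint grounds is the sum of the ranks, so
   for independent A'
     λ_L(A') = Σ_{i<k} ρ(M_i) - Σ_{i<k} |A ∩ S_i|
             = Σ_{i<k} λ_{M_i}(A ∩ S_i) - Σ_{i<k} ν_{M_i}(A ∩ S_i),
   which turns the last condition into the inequality for j = k. *)

Set Implicit Arguments. Unset Strict Implicit. Unset Printing Implicit Defensive.

Lemma leq_add_sumB (I : Type) (r : seq I) (a b c : I -> nat) (x : nat) :
  (forall i, c i <= a i) -> (forall i, c i <= b i) ->
  \sum_(i <- r) a i <= \sum_(i <- r) b i ->
  (x + \sum_(i <- r) (a i - c i) <= \sum_(i <- r) (b i - c i))
    = (x <= \sum_(i <- r) b i - \sum_(i <- r) a i).
Proof.
move=> le_ca le_cb le_ab.
rewrite (sumnB r (fun i _ => le_ca i)) (sumnB r (fun i _ => le_cb i)).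
have : \sum_(i <- r) c i <= \sum_(i <- r) a i by exact: leq_sum.
by move=> le_sum_ca; apply/idP/idP; lia.
Qed.

Lemma forall_natSr (P : nat -> Prop) n :
  (forall j, 1 <= j <= n.+1 -> P j) <-> (forall j, 1 <= j <= n -> P j) /\ P n.+1.
Proof.
split=> [hP | [hP hPn] j /andP [j_gt0 le_jn]].
  by split=> [j /andP [*]|]; apply: hP; lia.
have [-> //|ne_jn] := eqVneq j n.+1.
by apply: hP; lia.
Qed.

Lemma cardsIU (T : finType) (A X Y : {set T}) : [disjoint X & Y] ->
  #|A :&: (X :|: Y)| = #|A :&: X| + #|A :&: Y|.
Proof.
move=> dXY; rewrite setIUr -cardsUI setIACA setIid (disjoint_setI0 dXY).
by rewrite setI0 cards0 addn0.
Qed.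

Section Rank.
Variables (T : finType) (L : setsys T).
Implicit Types A B : {set T}.

Lemma rk_leq_card A : rk L A <= #|A|.
Proof. by apply/bigmax_leqP => B /andP [sBA _]; exact: subset_leq_card. Qed.

Lemma rkS A B : A \subset B -> rk L A <= rk L B.
Proof.
move=> sAB; apply/bigmax_leqP => C /andP [sCA iC].
by apply: leq_bigmax_cond; rewrite (subset_trans sCA sAB) iC.
Qed.

Lemma rk_indep A : indep L A -> rk L A = #|A|.
Proof.
move=> iA; apply/eqP; rewrite eqn_leq rk_leq_card.
by apply: leq_bigmax_cond; rewrite subxx iA.
Qed.

Lemma rk_witness A : indep L set0 ->
  exists2 B : {set T}, (B \subset A) && indep L B & #|B| = rk L A.
Proof.
move=> iL0.
have : 0 < #|[pred B : {set T} | (B \subset A) && indep L B]|.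
  by apply/card_gt0P; exists set0; rewrite inE sub0set iL0.
case/(eq_bigmax_cond (fun B : {set T} => #|B|)) => B; rewrite inE => BA maxE.
by exists B; rewrite // -maxE.
Qed.

Lemma nul_eq0 A : indep L set0 -> (nul L A == 0) = indep L A.
Proof.
move=> iL0; apply/idP/idP => [|iA]; last by rewrite /nul rk_indep ?subnn.
rewrite /nul subn_eq0 => le_A_rk.
have [B /andP [sBA iB] cardB] := rk_witness A iL0.
suff <- : B = A by [].
by apply/eqP; rewrite eqEcard sBA cardB.
Qed.

End Rank.

(* Plain [fprod] would resolve to the finite product type of finfun. *)
Section FreeProduct.
Variables (T : finType) (L N : setsys T).
Implicit Types A C : {set T}.

Lemma indep_fprodE A : A \subset ground L :|: ground N ->
  indep (Defs.fprod L N) A =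
    indep L (A :&: ground L) && (nul N (A :&: ground N) <= lam L (A :&: ground L)).
Proof. by move=> sA; rewrite /= sA. Qed.

Lemma indep0_fprod : indep L set0 -> indep (Defs.fprod L N) set0.
Proof. by move=> iL0; rewrite /= !set0I sub0set iL0 /nul cards0. Qed.

Hypothesis dLN : [disjoint ground L & ground N].

Lemma card_indep_fprod C : indep (Defs.fprod L N) C -> #|C| <= rkM L + rkM N.
Proof.
case/and3P => sC iCL; rewrite -(setIidPl sC) cardsIU // (setIidPl sC).
have : rk N (C :&: ground N) <= rkM N by exact: rkS (subsetIr _ _).
have : rk L (C :&: ground L) <= rkM L by exact: rkS (subsetIr _ _).
rewrite /nul /lam rk_indep //.
have := rk_leq_card N (C :&: ground N); lia.
Qed.

Lemma rkM_fprod : indep L set0 -> indep N set0 -> rkM (Defs.fprod L N) = rkM L + rkM N.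
Proof.
move=> iL0 iN0; apply/eqP; rewrite eqn_leq.
apply/andP; split; first by apply/bigmax_leqP => C /andP [_]; exact: card_indep_fprod.
have [BL /andP [sBL iBL] rkBL] := rk_witness (ground L) iL0.
have [BN /andP [sBN iBN] rkBN] := rk_witness (ground N) iN0.
have dB : [disjoint BL & BN] by apply: disjointWl sBL (disjointWr sBN dLN).
have BL_L : (BL :|: BN) :&: ground L = BL.
  rewrite setIUl (setIidPl sBL) (disjoint_setI0 (disjointWl sBN _)) ?setU0 //.
  by rewrite disjoint_sym.
have BN_N : (BL :|: BN) :&: ground N = BN.
  by rewrite setIUl (setIidPl sBN) (disjoint_setI0 (disjointWl sBL dLN)) set0U.
have cardB : #|BL :|: BN| = #|BL| + #|BN|.
  by rewrite cardsU disjoint_setI0 // cards0 subn0.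
rewrite /rkM -rkBL -rkBN -cardB.
apply: leq_bigmax_cond.
by rewrite /= setUSS //= BL_L BN_N iBL /nul rk_indep // subnn.
Qed.

End FreeProduct.

Section FreeProductChain.
Variables (T : finType) (M : nat -> setsys T).

Definition ground_upto n := \bigcup_(1 <= i < n.+1) ground (M i).

Definition fprod_ineq (A : {set T}) j :=
  \sum_(1 <= i < j.+1) nul (M i) (A :&: ground (M i))
    <= \sum_(1 <= i < j) lam (M i) (A :&: ground (M i)).

Lemma ground_uptoS n : ground_upto n.+1 = ground_upto n :|: ground (M n.+1).
Proof. by rewrite /ground_upto big_nat_recr. Qed.

Lemma sub_ground_upto i n : 1 <= i <= n -> ground (M i) \subset ground_upto n.
Proof.
move=> i_in; rewrite /ground_upto (bigD1_seq i) ?iota_uniq //= ?subsetUl //.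
by rewrite mem_index_iota ltnS.
Qed.

Lemma fprod_uptoS n : 0 < n -> fprod_upto M n.+1 = Defs.fprod (fprod_upto M n) (M n.+1).
Proof. by case: n. Qed.

Lemma ground_fprod_upto n : 0 < n -> ground (fprod_upto M n) = ground_upto n.
Proof.
elim: n => [|[|n] IH] // _; first by rewrite /ground_upto big_nat1.
by rewrite ground_uptoS -IH // fprod_uptoS.
Qed.

Lemma indep0_fprod_upto n : indep (M 1) set0 -> indep (fprod_upto M n) set0.
Proof. by move=> iM0; elim: n => [|[|n] IH] //; exact: indep0_fprod. Qed.

Lemma fprod_ineq1 (A : {set T}) : fprod_ineq A 1 = (nul (M 1) (A :&: ground (M 1)) == 0).
Proof. by rewrite /fprod_ineq big_nat1 big_geq // leqn0. Qed.

Lemma fprod_ineq_cap (A : {set T}) n j : j <= n ->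
  fprod_ineq (A :&: ground_upto n) j = fprod_ineq A j.
Proof.
move=> le_jn; have capE i : 1 <= i < j.+1 ->
    A :&: ground_upto n :&: ground (M i) = A :&: ground (M i).
  by move=> i_in; rewrite -setIA (setIidPr (sub_ground_upto _)) //; lia.
rewrite /fprod_ineq (eq_big_nat _ _ (fun i i_in => congr1 _ (capE i i_in))).
by rewrite (eq_big_nat _ _ (fun i i_in => congr1 _ (capE i _))) //; lia.
Qed.

Variable k : nat.
Hypothesis indep0_M : forall i, 1 <= i <= k -> indep (M i) set0.
Hypothesis disjoint_M : forall i j, 1 <= i -> i < j -> j <= k ->
  [disjoint ground (M i) & ground (M j)].

Lemma disjoint_ground_upto n : n < k -> [disjoint ground_upto n & ground (M n.+1)].
Proof.
move=> lt_nk; rewrite /ground_upto big_seq; elim/big_rec: _ => [|i X].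
  by rewrite -setI_eq0 set0I.
rewrite mem_index_iota => /andP [i_gt0 le_in] dX.
rewrite -setI_eq0 setIUl (disjoint_setI0 dX) setU0 setI_eq0.
exact: disjoint_M i_gt0 le_in lt_nk.
Qed.

Lemma card_cap_ground_upto (A : {set T}) n : n <= k ->
  #|A :&: ground_upto n| = \sum_(1 <= i < n.+1) #|A :&: ground (M i)|.
Proof.
elim: n => [|n IH] le_nk; first by rewrite /ground_upto !big_geq // setI0 cards0.
rewrite ground_uptoS cardsIU; last exact: disjoint_ground_upto.
by rewrite IH ?(ltnW le_nk) // [RHS]big_nat_recr.
Qed.

Lemma rkM_fprod_upto n : 0 < n <= k ->
  rkM (fprod_upto M n) = \sum_(1 <= i < n.+1) rkM (M i).
Proof.
elim: n => [|[|n] IH] // /andP [_ le_nk]; first by rewrite big_nat1.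
have iM0 : indep (M 1) set0 by apply: indep0_M; lia.
rewrite fprod_uptoS // rkM_fprod.
- by rewrite IH ?(ltnW le_nk) // [RHS]big_nat_recr.
- by rewrite ground_fprod_upto // disjoint_ground_upto.
- exact: indep0_fprod_upto.
- by apply: indep0_M; lia.
Qed.

Lemma fprod_ineqS (A : {set T}) n : 0 < n < k ->
  indep (fprod_upto M n) (A :&: ground_upto n) ->
  fprod_ineq A n.+1 =
    (nul (M n.+1) (A :&: ground (M n.+1))
       <= lam (fprod_upto M n) (A :&: ground_upto n)).
Proof.
move=> /andP [n_gt0 lt_nk] iA.
have le_rk_rkM : rk (fprod_upto M n) (A :&: ground_upto n) <= rkM (fprod_upto M n).
  by rewrite /rkM rkS // ground_fprod_upto // subsetIr.
move: le_rk_rkM; rewrite /lam rk_indep // card_cap_ground_upto ?(ltnW lt_nk) //.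
rewrite rkM_fprod_upto ?n_gt0 ?(ltnW lt_nk) // => le_card_rkM.
rewrite /fprod_ineq big_nat_recr //= addnC /nul /lam.
rewrite (leq_add_sumB (a := fun i => #|A :&: ground (M i)|) (b := fun i => rkM (M i))) //.
- by move=> i; exact: rk_leq_card.
- by move=> i; exact: rkS (subsetIr _ _).
Qed.

Lemma indep_fprod_upto n (A : {set T}) : 0 < n <= k -> A \subset ground_upto n ->
  indep (fprod_upto M n) A <-> (forall j, 1 <= j <= n -> fprod_ineq A j).
Proof.
elim: n A => [|[|n] IH] A // /andP [_ le_nk] sA; rewrite forall_natSr.
  have sA1 : A \subset ground (M 1) by rewrite /ground_upto big_nat1 in sA.
  have iM0 : indep (M 1) set0 by apply: indep0_M; lia.
  rewrite fprod_ineq1 /= -nul_eq0 // (setIidPl sA1).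
  by split=> [|[]] //; split=> // j; lia.
rewrite fprod_uptoS // indep_fprodE ground_fprod_upto //; last first.
  by rewrite -ground_uptoS.
set A' := A :&: ground_upto n.+1.
have IHA' := IH A' ltac:(lia) (subsetIr _ _).
have capE j : j <= n.+1 -> fprod_ineq A' j = fprod_ineq A j by exact: fprod_ineq_cap.
split=> [/andP [iA' le_nul_lam] | [ineqA ineqAn]].
  by split=> [j j_in|]; [rewrite -capE; [exact: IHA'.1|lia] | rewrite fprod_ineqS].
have iA' : indep (fprod_upto M n.+1) A'.
  by apply/IHA' => j j_in; rewrite capE ?ineqA //; lia.
by rewrite iA' -fprod_ineqS.
Qed.

End FreeProductChain.

Theorem proposition4p5 (T : finType) (k : nat) (M : nat -> setsys T) :
  1 <= k ->
  (forall i, 1 <= i <= k -> is_matroid (M i)) ->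
  (forall i j, 1 <= i -> i < j -> j <= k ->
     [disjoint ground (M i) & ground (M j)]) ->
  forall A : {set T},
    A \subset \bigcup_(1 <= i < k.+1) ground (M i) ->
    (indep (fprod_upto M k) A <->
     (forall j, 1 <= j <= k ->
        \sum_(1 <= i < j.+1) nul (M i) (A :&: ground (M i))
          <= \sum_(1 <= i < j) lam (M i) (A :&: ground (M i)))).
Proof.
move=> k_gt0 matroid_M disjoint_M A sA.
have indep0_M i : 1 <= i <= k -> indep (M i) set0 by case/matroid_M.
by apply: (indep_fprod_upto indep0_M disjoint_M _ sA); rewrite k_gt0 /=.
Qed.
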